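(* Let $\mathcal C$ be a clustering problem satisfying Assumption 1, $P\in\Lambda$ with $p_{\min}=\min_{i\in[K]}\min_{a\in\mathcal X}P_i(a)>0$, and $\sigma'\in\mathcal C\setminus\{\sigma_P\}$. Then for all $\gamma\in(0,1/K)$, $$C_{g_P^{\sigma'}}(\Sigma_K^\gamma)\le\frac D\gamma,\qquad D=\Big(\max_{\sigma''\in\mathcal C}\max_{m\in[M_{\sigma''}]}|\mathcal A_m^{\sigma''}|\Big)\frac{|\mathcal X|(1-p_{\min})}{4p_{\min}}.$$
   Context: Framework. Let $\mathcal X$ be a finite alphabet with $|\mathcal X|\ge2$, $\mathcal P(\mathcal X)$ the set of probability distributions on $\mathcal X$, and $K\ge2$ an integer (number of arms); $[n]=\{1,\dots,n\}$. A hypothesis is a collection $\sigma=\{\mathcal A_1^\sigma,\dots,\mathcal A_{M_\sigma}^\sigma\}$ ($M_\sigma\ge1$) of pairwise disjoint subsets of $[K]$, each of cardinality at least 2 (clusters); let $\mathcal A^\sigma_{M_\sigma+1}=[K]\setminus\bigcup_{m\le M_\sigma}\mathcal A_m^\sigma$. $\Lambda_\sigma$ is the set of $P\in\mathcal P(\mathcal X)^K$ with $P_i=P_j$ whenever $i,j\in\mathcal A_m^\sigma$ for some $m\le M_\sigma$, and $P_i\neq P_j$ whenever $i\in\mathcal A_{m_1}^\sigma$, $j\in\mathcal A_{m_2}^\sigma$ with $m_1\ne m_2\in[M_\sigma+1]$. A clustering problem is a finite set $\mathcal C$ of hypotheses with $|\mathcal C|\ge2$; $\Lambda=\bigcup_{\sigma\in\mathcal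 C}\Lambda_\sigma$. Hypothesis $\sigma$ dominates $\sigma'$ if every cluster of $\sigma$ is a subset of some cluster of $\sigma'$. Assumption 1: (i) there is no pair $\sigma\neq\sigma'$ in $\mathcal C$ such that $\sigma$ dominates $\sigma'$; (ii) every $P\in\Lambda$ belongs to $\Lambda_\sigma$ for exactly one $\sigma\in\mathcal C$, denoted $\sigma_P$. Functions. $D(P\|Q)$ is the KL divergence. $\Sigma_K=\{w\in\mathbb R^K: w_i\ge0,\sum_iw_i=1\}$, $\Sigma_K^\gamma=\{w\in\Sigma_K:w_i\ge\gamma\ \forall i\}$. For $\mathcal A\subseteq[K]$, $G(P_{\mathcal A},w_{\mathcal A})=0$ if $w_i=0$ for all $i\in\mathcal A$, and otherwise $G(P_{\mathcal A},w_{\mathcal A})=\sum_{i\in\mathcal A}w_iD(P_i\|W)$ with $W=\sum_{i\in\mathcal A}w_iP_i/\sum_{i\in\mathcal A}w_i$. For $\sigma\in\mathcal C$, $g_P^\sigma(w)=\sum_{m=1}^{M_\sigma}G(P_{\mathcal A_m^\sigma},w_{\mathcal A_m^\sigma})$ (a concave differentiable function on $\Sigma_K^\gamma$). For a concave differentiable $f$ on a compact convex set $\mathcal A$, the curvature constant is $$C_f(\mathcal A)=\sup_{x,z\in\mathcal A,\ \alpha\in(0,1],\ y=x+\alpha(z-x)}\frac1{\alpha^2}\big(f(x)-f(y)+\langle y-x,\nabla f(x)\rangle\big).$$ *)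

From mathcomp Require Import all_boot all_order all_algebra.
From mathcomp Require Import all_classical all_reals all_analysis.
Set Implicit Arguments. Unset Strict Implicit. Unset Printing Implicit Defensive.
Import Order.TTheory GRing.Theory Num.Theory.
Import numFieldNormedType.Exports.
Local Open Scope ring_scope.

Section Defs.
Variables (R : realType) (X : finType) (K : nat).

Definition is_distr (p : X -> R) : Prop :=
  (forall a, 0 <= p a) /\ \sum_(a : X) p a = 1.

Definition is_hypothesis (s : {set {set 'I_K}}) : Prop :=
  s != finset.set0 /\
  (forall A, A \in s -> 2 <= #|A|)%N /\
  (forall A B, A \in s -> B \in s -> A != B -> [disjoint A & B]).

(** the extra block A_{M+1} = [K] \ union of the clusters *)
Definition rest_block (s : {set {set 'I_K}}) : {set 'I_K} := ~: finset.cover s.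

Definition blocks (s : {set {set 'I_K}}) : {set {set 'I_K}} :=
  rest_block s |: s.

Definition in_Lambda (s : {set {set 'I_K}}) (P : 'I_K -> X -> R) : Prop :=
  (forall i, is_distr (P i)) /\
  (forall A i j, A \in s -> i \in A -> j \in A -> P i = P j) /\
  (forall B1 B2 i j, B1 \in blocks s -> B2 \in blocks s -> B1 != B2 ->
     i \in B1 -> j \in B2 -> P i <> P j).

Definition dominates (s s' : {set {set 'I_K}}) : Prop :=
  forall A, A \in s -> exists2 B, B \in s' & A \subset B.

Definition is_clustering_problem (C : {set {set {set 'I_K}}}) : Prop :=
  (2 <= #|C|)%N /\ (forall s, s \in C -> is_hypothesis s).

Definition Lambda (C : {set {set {set 'I_K}}}) (P : 'I_K -> X -> R) : Prop :=
  exists2 s, s \in C & in_Lambda s P.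

Definition assumption1 (C : {set {set {set 'I_K}}}) : Prop :=
  (forall s s', s \in C -> s' \in C -> s != s' -> ~ dominates s s') /\
  (forall P, Lambda C P -> exists! s, s \in C /\ in_Lambda s P).

(** KL divergence, with the convention 0 log (0/q) = 0 *)
Definition KL (p q : X -> R) : R :=
  \sum_(a : X) (if p a == 0 then 0 else p a * ln (p a / q a)).

Definition Gfun (P : 'I_K -> X -> R) (A : {set 'I_K}) (w : 'rV[R]_K) : R :=
  if [forall i in A, w 0 i == 0] then 0
  else let W := fun a => (\sum_(i in A) w 0 i * P i a) / (\sum_(i in A) w 0 i) in
       \sum_(i in A) w 0 i * KL (P i) W.

Definition gfun (P : 'I_K -> X -> R) (s : {set {set 'I_K}}) (w : 'rV[R]_K) : R :=
  \sum_(A in s) Gfun P A w.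

Local Open Scope classical_set_scope.
Definition simplex_ge (gamma : R) : set 'rV[R]_K :=
  [set w | (forall i, gamma <= w 0 i) /\ \sum_i w 0 i = 1].

Definition grad (f : 'rV[R]_K -> R) (x : 'rV[R]_K) : 'rV[R]_K :=
  \row_i ('D_(delta_mx 0 i) f x).

Definition inner (u v : 'rV[R]_K) : R := \sum_i u 0 i * v 0 i.

Definition curvature (f : 'rV[R]_K -> R) (A : set 'rV[R]_K) : \bar R :=
  ereal_sup [set e | exists x z alpha,
     [/\ A x, A z, 0 < alpha <= 1 &
      e = ((f x - f (x + alpha *: (z - x))
            + inner ((x + alpha *: (z - x)) - x) (grad f x)) / alpha ^+ 2)%:E]].

(** p_min = min_i min_a P_i(a)  (probabilities are <= 1, so 1 is a neutral start) *)
Definition pmin (P : 'I_K -> X -> R) : R :=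
  \big[Num.min/1]_(i < K) \big[Num.min/1]_(a : X) P i a.

Definition max_cluster (C : {set {set {set 'I_K}}}) : nat :=
  \max_(s in C) \max_(A in s) #|A|.

End Defs.

(* For w > 0 the partial derivative of G(P_A, w_A) in w_i is D(P_i || W_w), the terms
   coming from the derivative of the mixture W_w cancelling. Hence, along a segment
   y = x + alpha (z - x), the Bregman gap g(x) - g(y) + <y - x, grad g(x)> of each cluster
   equals sum_i y_i [D(P_i || W_x) - D(P_i || W_y)]. Bounding ln r by r - 1 turns this into
   a chi-square type expression, quadratic in alpha, whose alpha^2 coefficient is at most
   S_z^2 (1/p_min - 1) / S_y, where S_w is the mass of the cluster under w. Since S_y >= gamma
   and the cluster masses of z sum to at most 1, the curvature constant is at most
   (1/p_min - 1)/gamma, which is below D/gamma because clusters and X have at least two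
   elements. *)
From mathcomp Require Import all_boot all_order all_algebra.
From mathcomp Require Import all_classical all_reals all_analysis.
From mathcomp Require Import ring lra zify.
Set Implicit Arguments. Unset Strict Implicit. Unset Printing Implicit Defensive.
Import Order.TTheory GRing.Theory Num.Theory.
Import numFieldNormedType.Exports.
Local Open Scope ring_scope.

Section RealDerivatives.
Context {R : realType}.
Implicit Types (f g : R -> R) (x c d df dg : R).

Lemma is_derive1_add {f g x df dg} : is_derive x 1 f df -> is_derive x 1 g dg ->
  is_derive x 1 (fun t => f t + g t) (df + dg).
Proof. by move=> ? ?; apply: (@is_deriveD R R R f g). Qed.

Lemma is_derive1_mul {f g x df dg} : is_derive x 1 f df -> is_derive x 1 g dg ->
  is_derive x 1 (fun t => f t * g t) (f x * dg + g x * df).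
Proof. by move=> ? ?; apply: (@is_deriveM R R f g). Qed.

Lemma is_derive1_inv {f x df} : is_derive x 1 f df -> f x != 0 ->
  is_derive x 1 (fun t => (f t)^-1) (- (f x) ^- 2 * df).
Proof. by move=> fx fx0; apply: is_deriveV. Qed.

Lemma is_derive1_ln_comp {f x df} : is_derive x 1 f df -> 0 < f x ->
  is_derive x 1 (fun t => ln (f t)) ((f x)^-1 * df).
Proof. by move=> fx fx0; apply: (is_derive1_comp (is_derive1_ln fx0) fx). Qed.

Lemma is_derive1_affine x c d : is_derive x 1 (fun t : R => t * c + d) c.
Proof.
apply: (is_derive_eq (is_derive1_add
  (is_derive1_mul (is_derive_id x 1) (is_derive_cst c x 1)) (is_derive_cst d x 1))).
by rewrite /= mulr0 mulr1 add0r addr0.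
Qed.

Lemma is_derive1_big {I : Type} {r : seq I} {Pr : pred I} {F : I -> R -> R}
    {dF : I -> R} {x} :
  (forall i, Pr i -> is_derive x 1 (F i) (dF i)) ->
  is_derive x 1 (fun t => \sum_(i <- r | Pr i) F i t) (\sum_(i <- r | Pr i) dF i).
Proof.
move=> dFi; elim: r => [|a r IHr].
  under eq_fun do rewrite big_nil.
  by rewrite big_nil; apply: is_derive_cst.
under eq_fun do rewrite big_cons.
rewrite big_cons; case: (boolP (Pr a)) => Pra //.
exact: is_derive1_add (dFi a Pra) IHr.
Qed.

Lemma is_derive1_ln_ratio {p cS S cV V : R} : 0 < p -> 0 < S -> 0 < V ->
  is_derive (0 : R) 1 (fun t => p * ln (p * (t * cS + S) / (t * cV + V)))
    (p * (cS / S - cV / V)).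
Proof.
move=> p0 S0 V0.
have V0' : 0 * cV + V != 0 by rewrite mul0r add0r gt_eqF.
have ratio0 : 0 < p * (0 * cS + S) / (0 * cV + V) by rewrite !mul0r !add0r divr_gt0 ?mulr_gt0.
apply: (is_derive_eq (is_derive1_mul (is_derive_cst p (0 : R) 1)
  (is_derive1_ln_comp (is_derive1_mul
     (is_derive1_mul (is_derive_cst p (0 : R) 1) (is_derive1_affine 0 cS S))
     (is_derive1_inv (is_derive1_affine 0 cV V) V0')) ratio0))).
rewrite /= !mul0r !add0r !mulr0 ?add0r ?addr0.
by field; rewrite !gt_eqF.
Qed.

End RealDerivatives.

Lemma derive_along_line (R : realType) (n : nat) (f : 'rV[R]_n -> R) x v :
  'D_v f x = 'D_1 (fun t : R => f (t *: v + x)) 0.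
Proof.
rewrite /derive /= scale0r add0r.
suff -> : (fun h : R => h^-1 *: (f ((h%:A + 0) *: v + x) - f x)) =
          (fun h : R => h^-1 *: (f (h *: v + x) - f x)) by [].
by apply/funext => h; rewrite addr0 [h%:A]mulr1.
Qed.

Lemma sum_indicator_mul (R : pzRingType) (T : finType) (A : {pred T}) i
    (F : T -> R) :
  \sum_(j in A) (j == i)%:R * F j = (i \in A)%:R * F i.
Proof.
case: (boolP (i \in A)) => iA.
  rewrite (bigD1 i) //= eqxx mul1r big1 ?addr0 ?mul1r // => j /andP[_ /negbTE ->].
  by rewrite mul0r.
rewrite big1 ?mul0r // => j jA.
by rewrite (_ : (j == i) = false) ?mul0r //; apply: contraNF iA => /eqP <-.
Qed.

Lemma card_gt1_neq (T : finType) (A : {set T}) i : (1 < #|A|)%N ->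
  exists2 j, j \in A & j != i.
Proof.
case/card_gt1P => [j [k [jA kA jk]]].
have [ji|ji] := eqVneq j i; last by exists j.
by exists k; rewrite // -ji eq_sym.
Qed.

Lemma pmin_le (R : realType) (X : finType) (K : nat) (P : 'I_K -> X -> R) j a :
  pmin P <= P j a.
Proof. exact: le_trans (bigmin_le _ j _) (bigmin_le _ a _). Qed.

Lemma pmin_le1 (R : realType) (X : finType) (K : nat) (P : 'I_K -> X -> R) :
  pmin P <= 1.
Proof. exact: bigmin_le_id. Qed.

Section ClusterDivergence.
Variables (R : realType) (X : finType) (K : nat) (P : 'I_K -> X -> R).
Hypothesis P_gt0 : forall j a, 0 < P j a.
Hypothesis P_sum1 : forall j, \sum_(a : X) P j a = 1.
Implicit Types (A : {set 'I_K}) (w x y z : 'rV[R]_K).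

(* The mass S_w and the unnormalized mixture S_w W_w of the cluster A under w. *)
Definition wsum A w := \sum_(j in A) w 0 j.
Definition wmix A w a := \sum_(j in A) w 0 j * P j a.

Definition klmix A w i := \sum_(a : X) P i a * ln (P i a * wsum A w / wmix A w a).

Lemma Gfun_klmix A w : (exists2 j, j \in A & w 0 j != 0) ->
  Gfun P A w = \sum_(j in A) w 0 j * klmix A w j.
Proof.
move=> [j jA wj0]; rewrite /Gfun ifF; last first.
  by apply: contraTF wj0 => /forall_inP/(_ j jA) ->.
apply: eq_bigr => k _; congr (_ * _); apply: eq_bigr => a _.
by rewrite ifF ?gt_eqF // invf_div mulrA.
Qed.

Lemma sum_wmix A w : \sum_(a : X) wmix A w a = wsum A w.
Proof.
rewrite /wmix exchange_big /=; apply: eq_bigr => j _.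
by rewrite -mulr_sumr P_sum1 mulr1.
Qed.

Lemma sum_weighted_expect A w (c : X -> R) :
  \sum_(i in A) w 0 i * \sum_(a : X) P i a * c a = \sum_(a : X) wmix A w a * c a.
Proof.
under eq_bigr do rewrite mulr_sumr.
rewrite exchange_big /=; apply: eq_bigr => a _.
by rewrite /wmix mulr_suml; apply: eq_bigr => j _; rewrite mulrA.
Qed.

Lemma wsum_gt0 A w j : j \in A -> (forall k, 0 < w 0 k) -> 0 < wsum A w.
Proof.
move=> jA w_gt0; rewrite /wsum (bigD1 j) //= ltr_wpDr ?w_gt0 //.
by apply: sumr_ge0 => k _; apply/ltW.
Qed.

Lemma wmix_gt0 A w j a : j \in A -> (forall k, 0 < w 0 k) -> 0 < wmix A w a.
Proof.
move=> jA w_gt0; rewrite /wmix (bigD1 j) //= ltr_wpDr ?mulr_gt0 ?w_gt0 //.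
by apply: sumr_ge0 => k _; apply/ltW/mulr_gt0.
Qed.

Lemma wmix_ge0 A w a : (forall k, 0 <= w 0 k) -> 0 <= wmix A w a.
Proof. by move=> w_ge0; apply: sumr_ge0 => k _; rewrite mulr_ge0 // ltW. Qed.

Lemma wmix_le_wsum A w a : (forall k, 0 <= w 0 k) -> wmix A w a <= wsum A w.
Proof.
move=> w_ge0; rewrite -sum_wmix (bigD1 a) //= lerDl.
by apply: sumr_ge0 => b _; apply: wmix_ge0.
Qed.

Lemma wmix_ge_pmin A w a : (forall k, 0 <= w 0 k) -> pmin P * wsum A w <= wmix A w a.
Proof.
move=> w_ge0; rewrite /wsum /wmix mulr_sumr; apply: ler_sum => j _.
by rewrite mulrC ler_wpM2l ?pmin_le.
Qed.

Lemma wsum_lerp A x z al :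
  wsum A (x + al *: (z - x)) = wsum A x + al * (wsum A z - wsum A x).
Proof.
rewrite /wsum -sumrB mulr_sumr -big_split; apply: eq_bigr => j _.
by rewrite !mxE.
Qed.

Lemma wmix_lerp A x z al a :
  wmix A (x + al *: (z - x)) a = wmix A x a + al * (wmix A z a - wmix A x a).
Proof.
rewrite /wmix -sumrB mulr_sumr -big_split; apply: eq_bigr => j _.
by rewrite !mxE /=; ring.
Qed.

Lemma Gfun_along_coordinate A x i j0 : j0 \in A -> j0 != i -> 0 < x 0 j0 -> forall t,
  Gfun P A (t *: delta_mx 0 i + x) =
  \sum_(j in A) (t * (j == i)%:R + x 0 j) * \sum_(a : X) P j a *
    ln (P j a * (t * (i \in A)%:R + wsum A x) / (t * ((i \in A)%:R * P i a) + wmix A x a)).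
Proof.
move=> j0A j0i xj0_gt0 t.
have entry j : (t *: delta_mx 0 i + x) 0 j = t * (j == i)%:R + x 0 j.
  by rewrite !mxE eqxx.
rewrite Gfun_klmix; last first.
  by exists j0 => //; rewrite entry (negbTE j0i) mulr0 add0r gt_eqF.
apply: eq_bigr => j _; rewrite entry; congr (_ * _).
apply: eq_bigr => a _; congr (_ * ln (_ * _ / _)).
  rewrite /wsum; under eq_bigr do rewrite entry.
  rewrite big_split /= -mulr_sumr (eq_bigr (fun k => (k == i)%:R * 1)) => [|k _];
    by rewrite ?sum_indicator_mul mulr1.
rewrite /wmix; under eq_bigr do rewrite entry mulrDl -mulrA.
by rewrite big_split /= -mulr_sumr sum_indicator_mul.
Qed.

(* The mixture terms vanish in the derivative: sum_a W_x(a) (c/S_x - c P_i(a)/W_x(a)) = 0. *)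
Lemma is_derive_Gfun_line A x i : (forall j, 0 < x 0 j) ->
  (exists2 j, j \in A & j != i) ->
  is_derive (0 : R) 1 (fun t => Gfun P A (t *: delta_mx 0 i + x))
    ((i \in A)%:R * klmix A x i).
Proof.
move=> x_gt0 [j0 j0A j0i].
under eq_fun do rewrite (Gfun_along_coordinate j0A j0i (x_gt0 j0)).
set cS : R := (i \in A)%:R; set S := wsum A x; set V := wmix A x.
have S_gt0 : 0 < S by apply: wsum_gt0 j0A x_gt0.
have V_gt0 a : 0 < V a by apply: wmix_gt0 j0A x_gt0.
have dterm j : is_derive (0 : R) 1
    (fun t => (t * (j == i)%:R + x 0 j) *
       \sum_(a : X) P j a * ln (P j a * (t * cS + S) / (t * (cS * P i a) + V a)))
    (x 0 j * \sum_(a : X) P j a * (cS / S - cS * P i a / V a)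
     + (j == i)%:R * klmix A x j).
  have dlog := is_derive1_big (r := index_enum X) (Pr := xpredT)
    (F := fun a t => P j a * ln (P j a * (t * cS + S) / (t * (cS * P i a) + V a)))
    (fun a _ => is_derive1_ln_ratio (P_gt0 j a) S_gt0 (V_gt0 a)).
  apply: (is_derive_eq (is_derive1_mul (is_derive1_affine _ _ _) dlog)).
  rewrite mul0r add0r [_ * (j == i)%:R]mulrC /klmix; congr (_ + _ * _).
  by apply: eq_bigr => a _; rewrite !mul0r !add0r.
apply: (is_derive_eq (is_derive1_big (fun j _ => dterm j))).
rewrite big_split /= sum_indicator_mul sum_weighted_expect.
have -> : \sum_(a : X) V a * (cS / S - cS * P i a / V a) = 0.
  transitivity (\sum_(a : X) (cS / S * V a - cS * P i a)).
    by apply: eq_bigr => a _; rewrite mulrBr mulrC [V a * _]mulrC divfK ?gt_eqF.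
  rewrite sumrB -!mulr_sumr sum_wmix P_sum1 -/S.
  by field; rewrite gt_eqF.
by rewrite add0r.
Qed.

Lemma partial_gfun (s : {set {set 'I_K}}) x i : (forall j, 0 < x 0 j) ->
  (forall A, A \in s -> (1 < #|A|)%N) ->
  'D_(delta_mx 0 i) (gfun P s) x = \sum_(A in s) (i \in A)%:R * klmix A x i.
Proof.
move=> x_gt0 s_card; rewrite derive_along_line.
have dG : is_derive (0 : R) 1 (fun t => \sum_(A in s) Gfun P A (t *: delta_mx 0 i + x))
    (\sum_(A in s) (i \in A)%:R * klmix A x i).
  apply: is_derive1_big => A As; apply: is_derive_Gfun_line => //.
  exact: card_gt1_neq (s_card A As).
rewrite /gfun; exact: (@derive_val _ _ _ _ _ _ _ dG).
Qed.

Lemma gfun_bregman (s : {set {set 'I_K}}) x y :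
  (forall j, 0 < x 0 j) -> (forall j, 0 < y 0 j) ->
  (forall A, A \in s -> (1 < #|A|)%N) ->
  gfun P s x - gfun P s y + inner (y - x) (grad (gfun P s) x) =
  \sum_(A in s) \sum_(i in A) y 0 i * (klmix A x i - klmix A y i).
Proof.
move=> x_gt0 y_gt0 s_card.
have G_klmix w A : (forall j, 0 < w 0 j) -> A \in s ->
    Gfun P A w = \sum_(i in A) w 0 i * klmix A w i.
  move=> w_gt0 As; apply: Gfun_klmix.
  have /card_gt0P[j jA] := ltnW (s_card A As).
  by exists j; rewrite ?gt_eqF.
have -> : inner (y - x) (grad (gfun P s) x) =
    \sum_(A in s) \sum_(i in A) (y 0 i - x 0 i) * klmix A x i.
  rewrite /inner; under eq_bigr do rewrite !mxE partial_gfun // mulr_sumr.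
  rewrite exchange_big /=; apply: eq_bigr => A _.
  rewrite [RHS]big_mkcond /=; apply: eq_bigr => i _.
  by case: (i \in A); rewrite ?mul1r ?mul0r ?mulr0.
rewrite /gfun -sumrB -big_split /=; apply: eq_bigr => A As.
rewrite (G_klmix x) // (G_klmix y) // -sumrB -big_split /=.
by apply: eq_bigr => i _; ring.
Qed.

Lemma ln_le_subr1 (r : R) : 0 < r -> ln r <= r - 1.
Proof. by move=> r0; have := @le_ln1Dx R (r - 1); rewrite addrCA subrr addr0; apply; lra. Qed.

(* ln r <= r - 1 applied to r = W_y(a) / W_x(a). *)
Lemma cluster_gap_le_chi2 A x y j0 : j0 \in A ->
  (forall j, 0 < x 0 j) -> (forall j, 0 < y 0 j) ->
  \sum_(i in A) y 0 i * (klmix A x i - klmix A y i) <=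
  wsum A x / wsum A y * \sum_(a : X) (wmix A y a ^+ 2 / wmix A x a) - wsum A y.
Proof.
move=> j0A x_gt0 y_gt0.
set Sx := wsum A x; set Sy := wsum A y; set Vx := wmix A x; set Vy := wmix A y.
have Sx_gt0 : 0 < Sx by apply: wsum_gt0 j0A x_gt0.
have Sy_gt0 : 0 < Sy by apply: wsum_gt0 j0A y_gt0.
have Vx_gt0 a : 0 < Vx a by apply: wmix_gt0 j0A x_gt0.
have Vy_gt0 a : 0 < Vy a by apply: wmix_gt0 j0A y_gt0.
apply: (@le_trans _ _ (\sum_(i in A) y 0 i * \sum_(a : X) P i a *
     (Sx * Vy a / (Vx a * Sy) - 1))).
  apply: ler_sum => i _; rewrite ler_pM2l //.
  rewrite /klmix -sumrB; apply: ler_sum => a _; rewrite -mulrBr ler_pM2l //.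
  rewrite -ln_div ?posrE ?divr_gt0 ?mulr_gt0 //.
  have -> : P i a * Sx / Vx a / (P i a * Sy / Vy a) = Sx * Vy a / (Vx a * Sy).
    by field; rewrite !gt_eqF.
  by apply: ln_le_subr1; rewrite divr_gt0 ?mulr_gt0.
rewrite sum_weighted_expect -/Vy (eq_bigr (fun a => Sx / Sy * (Vy a ^+ 2 / Vx a) - Vy a)).
  by rewrite sumrB -mulr_sumr sum_wmix.
by move=> a _; field; rewrite !gt_eqF.
Qed.

Lemma chi2_lerp A x z al : (forall a, wmix A x a != 0) ->
  \sum_(a : X) (wmix A (x + al *: (z - x)) a ^+ 2 / wmix A x a) =
  (1 - al) ^+ 2 * wsum A x + 2 * al * (1 - al) * wsum A z +
  al ^+ 2 * \sum_(a : X) (wmix A z a ^+ 2 / wmix A x a).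
Proof.
move=> Vx_neq0.
transitivity (\sum_(a : X) ((1 - al) ^+ 2 * wmix A x a + 2 * al * (1 - al) * wmix A z a +
    al ^+ 2 * (wmix A z a ^+ 2 / wmix A x a))).
  by apply: eq_bigr => a _; rewrite wmix_lerp; field.
by rewrite !big_split /= -!mulr_sumr !sum_wmix.
Qed.

Lemma chi2_le_pmin A x z : 0 < pmin P -> (forall j, 0 <= x 0 j) ->
  (forall j, 0 <= z 0 j) -> (forall a, 0 < wmix A x a) ->
  wsum A x * \sum_(a : X) (wmix A z a ^+ 2 / wmix A x a) <= wsum A z ^+ 2 / pmin P.
Proof.
move=> p_gt0 x_ge0 z_ge0 Vx_gt0.
rewrite mulr_sumr; apply: (@le_trans _ _ (\sum_(a : X) wmix A z a * wsum A z / pmin P)).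
  apply: ler_sum => a _; rewrite mulrCA.
  have SxVx : wsum A x / wmix A x a <= (pmin P)^-1.
    by rewrite ler_pdivrMr // ler_pdivlMl // wmix_ge_pmin.
  apply: (@le_trans _ _ (wmix A z a ^+ 2 * (pmin P)^-1)).
    by apply: ler_wpM2l; rewrite ?sqr_ge0.
  apply: ler_wpM2r; first by rewrite invr_ge0 ltW.
  by rewrite expr2; apply: ler_wpM2l; [exact: wmix_ge0 | exact: wmix_le_wsum].
by rewrite -!mulr_suml sum_wmix expr2.
Qed.

Lemma cluster_gap_le A x z al j0 : j0 \in A -> 0 < pmin P ->
  (forall j, 0 < x 0 j) -> (forall j, 0 <= z 0 j) ->
  (forall j, 0 < (x + al *: (z - x)) 0 j) ->
  \sum_(i in A) (x + al *: (z - x)) 0 i *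
    (klmix A x i - klmix A (x + al *: (z - x)) i) <=
  al ^+ 2 * (wsum A z ^+ 2 / pmin P - wsum A z ^+ 2) / wsum A (x + al *: (z - x)).
Proof.
move=> j0A p_gt0 x_gt0 z_ge0 y_gt0.
apply: le_trans (cluster_gap_le_chi2 j0A x_gt0 y_gt0) _.
have Vx_gt0 a : 0 < wmix A x a by apply: wmix_gt0 j0A x_gt0.
have Sy_gt0 := wsum_gt0 j0A y_gt0.
rewrite chi2_lerp => [|a]; last by rewrite gt_eqF.
set Q := \sum_(a : X) _.
have -> : forall Sy Sx Sz, Sy = Sx + al * (Sz - Sx) -> Sy != 0 ->
    Sx / Sy * ((1 - al) ^+ 2 * Sx + 2 * al * (1 - al) * Sz + al ^+ 2 * Q) - Sy =
    al ^+ 2 * (Sx * Q - Sz ^+ 2) / Sy.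
  by move=> Sy Sx Sz -> Sy_neq0; field.
- rewrite ler_pM2r ?invr_gt0 //; apply: ler_wpM2l; first exact: sqr_ge0.
  by rewrite lerD2r; apply: chi2_le_pmin => // j; apply: ltW.
- exact: wsum_lerp.
- by rewrite gt_eqF.
Qed.

Lemma sum_wsum_le1 (s : {set {set 'I_K}}) z : finset.trivIset s ->
  (forall j, 0 <= z 0 j) -> \sum_j z 0 j = 1 -> \sum_(A in s) wsum A z <= 1.
Proof.
move=> s_triv z_ge0 z_sum1; rewrite /wsum -finset.big_trivIset // -z_sum1.
by rewrite [X in _ <= X](bigID (mem (finset.cover s))) /= lerDl sumr_ge0.
Qed.

Lemma curvature_quotient_le (s : {set {set 'I_K}}) gamma x z al :
  0 < pmin P -> (forall A, A \in s -> (1 < #|A|)%N) -> finset.trivIset s ->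
  0 < gamma -> simplex_ge gamma x -> simplex_ge gamma z -> 0 < al <= 1 ->
  (gfun P s x - gfun P s (x + al *: (z - x)) +
   inner ((x + al *: (z - x)) - x) (grad (gfun P s) x)) / al ^+ 2 <=
  ((pmin P)^-1 - 1) / gamma.
Proof.
move=> p_gt0 s_card s_triv g_gt0 [x_ge x_sum1] [z_ge z_sum1] /andP[al_gt0 al_le1].
set y := x + al *: (z - x).
have x_gt0 j : 0 < x 0 j by apply: lt_le_trans (x_ge j).
have z_ge0 j : 0 <= z 0 j by apply/ltW/(lt_le_trans g_gt0 (z_ge j)).
have y_ge j : gamma <= y 0 j.
  by rewrite !mxE; have := x_ge j; have := z_ge j; nra.
have y_gt0 j : 0 < y 0 j by apply: lt_le_trans (y_ge j).
set c := (pmin P)^-1 - 1.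
have c_ge0 : 0 <= c by rewrite subr_ge0 invf_ge1 ?pmin_le1.
have Sz_le1 A : A \in s -> wsum A z <= 1.
  move=> As; apply: le_trans _ (sum_wsum_le1 s_triv z_ge0 z_sum1).
  by rewrite (bigD1 A) //= lerDl sumr_ge0 // => B _; apply: sumr_ge0.
have gapA A : A \in s ->
    \sum_(i in A) y 0 i * (klmix A x i - klmix A y i) <= al ^+ 2 * c * wsum A z / gamma.
  move=> As; have /card_gt0P[j0 j0A] := ltnW (s_card A As).
  apply: le_trans (cluster_gap_le j0A p_gt0 x_gt0 z_ge0 y_gt0) _.
  set Sy := wsum A y; set Sz := wsum A z.
  have Sy_ge : gamma <= Sy.
    rewrite /Sy /wsum (bigD1 j0) //= -[gamma]addr0 lerD ?y_ge //.
    by apply: sumr_ge0 => j _; apply/ltW.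
  have Sy_gt0 : 0 < Sy by apply: lt_le_trans Sy_ge.
  have -> : al ^+ 2 * (Sz ^+ 2 / pmin P - Sz ^+ 2) / Sy = al ^+ 2 * c * Sz * (Sz / Sy).
    by rewrite /c; field; rewrite !gt_eqF.
  have Sz_ge0 : 0 <= Sz by apply: sumr_ge0.
  apply: ler_wpM2l; first by rewrite mulr_ge0 // mulr_ge0 // sqr_ge0.
  rewrite ler_pdivrMr //; apply: le_trans (Sz_le1 A As) _.
  by rewrite ler_pdivlMl // mulr1.
rewrite gfun_bregman // ler_pdivrMr ?exprn_gt0 //.
apply: le_trans (ler_sum _ gapA) _.
rewrite -mulr_suml -mulr_sumr (mulrC (c / gamma)) mulrA.
apply: ler_wpM2r; first by rewrite invr_ge0 ltW.
apply: ler_piMr; first by rewrite mulr_ge0 // sqr_ge0.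
exact: sum_wsum_le1 z_sum1.
Qed.

End ClusterDivergence.

Theorem lemma8 (R : realType) (X : finType) (K : nat)
  (C : {set {set {set 'I_K}}}) (P : 'I_K -> X -> R)
  (sP s' : {set {set 'I_K}}) (gamma : R) :
  (1 < #|X|)%N -> (2 <= K)%N ->
  is_clustering_problem C -> assumption1 R X C ->
  sP \in C -> in_Lambda sP P ->      (* sP = sigma_P, P in Lambda *)
  0 < pmin P ->
  s' \in C -> s' != sP ->
  0 < gamma -> gamma < K%:R^-1 ->
  (curvature (gfun P s') (@simplex_ge R K gamma) <=
   ((max_cluster C)%:R * (#|X|%:R * (1 - pmin P) / (4 * pmin P)) / gamma)%:E)%E.
Proof.
move=> X_gt1 _ [_ C_hyp] _ _ [P_distr _] p_gt0 s'C _ g_gt0 _.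
have P_gt0 j a : 0 < P j a by apply: lt_le_trans (pmin_le P j a).
have P_sum1 j : \sum_(a : X) P j a = 1 by case: (P_distr j).
have [s'_neq0 [s'_card s'_disj]] := C_hyp s' s'C.
have s'_triv : finset.trivIset s' by apply/finset.trivIsetP.
have max_cluster_ge2 : (2 <= max_cluster C)%N.
  have [A As'] := set0Pn _ s'_neq0.
  apply: leq_trans (s'_card A As') _.
  apply: leq_trans (@leq_bigmax_cond _ (mem s') (fun A => #|A|) A As') _.
  exact: (@leq_bigmax_cond _ (mem C) (fun s => \max_(A in s) #|A|) s' s'C).
apply: ge_ereal_sup => _ [x [z [al [xS zS al01 ->]]]].
rewrite lee_fin; apply: le_trans (curvature_quotient_le P_gt0 P_sum1 p_gt0 s'_card
  s'_triv g_gt0 xS zS al01) _.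
apply: ler_wpM2r; first by rewrite invr_ge0 ltW.
have -> : (max_cluster C)%:R * (#|X|%:R * (1 - pmin P) / (4 * pmin P)) =
          ((max_cluster C * #|X|)%:R / 4) * ((pmin P)^-1 - 1).
  by rewrite natrM; field; rewrite gt_eqF.
apply: ler_peMl; first by rewrite subr_ge0 invf_ge1 ?pmin_le1.
rewrite ler_pdivlMr // mul1r (_ : 4 = (2 * 2)%:R) // ler_nat.
exact: leq_mul.
Qed.
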